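(* Let $G$ be a finite simple graph on the vertex set $[n]$ and let $A$ be a minimal cut set of $G$. Then $A \in \mathcal{C}(G)$. Moreover, if $G$ is a generalized block graph, then for every $T \in \mathcal{C}(G)$, either $A \subseteq T$ or $A \cap T = \emptyset$.
   Context: For $T \subseteq [n]$ let $\overline{T} = [n]\setminus T$, let $G[\overline{T}]$ be the induced subgraph on $\overline{T}$, let $c_G(T)$ be the number of connected components of $G[\overline{T}]$, and let $c_G$ be the number of connected components of $G$. A subset $T \subset [n]$ is a cut set of $G$ if $c_G(T) > c_G$; a minimal cut set is a cut set minimal under inclusion. A vertex $v$ is a cut vertex of a graph $H$ if removing $v$ increases the number of connected components. $T$ has the cut point property if for each $i \in T$, $i$ is a cut vertex of $G[\overline{T}\cup\{i\}]$; $\mathcal{C}(G) = \{\emptyset\} \cup \{T : T \text{ has the cut point property}\}$. The clique complex $\Delta(G)$ is the simplicial complex whose facets are the maximal cliques of $G$. A chordal graph $G$ is a generalized block graph if whenever $F_i, F_j, F_k$ are facets of $\Delta(G)$ with $F_i \cap F_j \cap F_k \neq \emptyset$, then $F_i \cap F_j = F_i \cap F_k = F_j \cap F_k$. *)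

From mathcomp Require Import all_boot.
Set Implicit Arguments. Unset Strict Implicit. Unset Printing Implicit Defensive.

Definition simple_graph (n : nat) (e : rel 'I_n) : Prop :=
  symmetric e /\ irreflexive e.

Section Graphs.
Variables (n : nat) (e : rel 'I_n).

Definition induced_rel (S : {set 'I_n}) : rel 'I_n :=
  fun x y => [&& e x y, x \in S & y \in S].

Definition comp_of (S : {set 'I_n}) (x : 'I_n) : {set 'I_n} :=
  [set y in S | connect (induced_rel S) x y].

Definition ncomp (S : {set 'I_n}) : nat :=
  #|[set comp_of S x | x in S]|.

Definition cG (T : {set 'I_n}) : nat := ncomp (~: T).
Definition cG0 : nat := ncomp setT.

Definition cut_set (T : {set 'I_n}) : bool := cG0 < cG T.

Definition minimal_cut_set (T : {set 'I_n}) : bool := minset cut_set T.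

Definition cut_vertex (S : {set 'I_n}) (v : 'I_n) : bool :=
  (v \in S) && (ncomp S < ncomp (S :\ v)).

Definition cut_point_property (T : {set 'I_n}) : bool :=
  [forall i in T, cut_vertex (i |: ~: T) i].

Definition cut_point_sets (T : {set 'I_n}) : bool :=
  (T == set0) || cut_point_property T.

Definition clique (K : {set 'I_n}) : bool :=
  [forall x in K, forall y in K, (x != y) ==> e x y].

Definition facet (F : {set 'I_n}) : bool := maxset clique F.

(* chordal: every cycle of length >= 4 (on distinct vertices) has a chord,
   i.e. an edge between two vertices that are not consecutive on the cycle *)
Definition chordal : Prop :=
  forall (x : 'I_n) (p : seq 'I_n), let s := x :: p in
    uniq s -> 4 <= size s -> cycle e s ->
    exists i j : nat, [/\ i < j, j < size s, j != i.+1,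
      ~~ ((i == 0) && (j == (size s).-1)) & e (nth x s i) (nth x s j)].

Definition generalized_block_graph : Prop :=
  chordal /\
  forall Fi Fj Fk : {set 'I_n}, facet Fi -> facet Fj -> facet Fk ->
    Fi != Fj -> Fi != Fk -> Fj != Fk ->
    Fi :&: Fj :&: Fk != set0 ->
    Fi :&: Fj = Fi :&: Fk /\ Fi :&: Fk = Fj :&: Fk.

End Graphs.

From mathcomp Require Import all_boot zify.
Set Implicit Arguments. Unset Strict Implicit. Unset Printing Implicit Defensive.

(* Removing i from a minimal cut set A gives a non-cut set, so adding i back to
   G - A merges components: i is a cut vertex of G[~A + i].
   A minimal cut set A has two full components C1, C2 of G - A (every vertex
   of A has neighbours in both).  In a chordal graph, shortest paths through
   C1 and C2 would otherwise close up to chordless cycles of length at least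
   4; hence A is a clique and any two i, j in A have common neighbours z in C1
   and w in C2.  As z and w are non-adjacent, the facets containing {i,j,z}
   and {i,j,w} differ.  Now let i be in A and T, and j in A but not in T,
   where T has the cut point property: i has a neighbour x in G - T that is
   not connected to j there.  A facet containing {i,x} meets the two previous
   facets in i, so the block graph condition puts j into it, whence x = j or
   x ~ j, a contradiction. *)

Section ImsetFactor.
Variables (aT rT rT' : finType) (X : {set aT}) (f : aT -> rT) (g : aT -> rT').
Hypothesis f_of_g : {in X &, forall x y, g x = g y -> f x = f y}.

Lemma imset_factor x0 : x0 \in X ->
  exists2 h : rT' -> rT, {in X, forall x, f x = h (g x)} & f @: X = h @: (g @: X).
Proof.
move=> Xx0; set h := fun c => f (odflt x0 [pick x in X | g x == c]).
have fh : {in X, forall x, f x = h (g x)}.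
  move=> x Xx; rewrite /h; case: pickP => [y /andP[Xy /eqP gyx] | /(_ x)].
    exact: f_of_g Xx Xy (esym gyx).
  by rewrite Xx eqxx.
by exists h; rewrite // -imset_comp; apply: eq_in_imset.
Qed.

Lemma leq_card_imset_factor : #|f @: X| <= #|g @: X|.
Proof.
case: (set_0Vmem X) => [X0 | [x0 /imset_factor [h _ ->]]].
  by rewrite X0 !imset0 !cards0.
exact: leq_imset_card.
Qed.

Lemma ltn_card_imset_factor x y : x \in X -> y \in X ->
  f x = f y -> g x != g y -> #|f @: X| < #|g @: X|.
Proof.
move=> Xx Xy fxy; have [h fh ->] := imset_factor Xx.
rewrite ltn_neqAle leq_imset_card andbT.
apply: contra => /imset_injP inj; apply/eqP/inj; rewrite ?imset_f //.
by rewrite -fh // -fh.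
Qed.

End ImsetFactor.

Lemma not_uniq_split (T : eqType) (s : seq T) :
  ~~ uniq s -> exists s1 x s2 s3, s = s1 ++ x :: s2 ++ x :: s3.
Proof.
elim: s => //= y s IH; rewrite negb_and negbK.
case/orP => [/splitPr [s2 s3] | /IH [s1 [x [s2 [s3 ->]]]]].
  by exists [::], y, s2, s3.
by exists (y :: s1), x, s2, s3.
Qed.

Lemma mem_behead_neq (T : eqType) x (s : seq T) y :
  y \in s -> y != head x s -> y \in behead s.
Proof. by case: s => //= z s; rewrite in_cons => /predU1P[-> | //]; rewrite eqxx. Qed.

Section ShortestPaths.
Variables (T : finType) (e : rel T).
Implicit Types (C : {set T}) (a b x y z : T) (s p q : seq T).

Lemma path_catr x s1 y s2 : path e x (s1 ++ y :: s2) -> path e y s2.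
Proof. by rewrite cat_path /= => /and3P[]. Qed.

Fixpoint chordless (s : seq T) : bool :=
  if s is x :: s' then all (fun y => ~~ e x y) (behead s') && chordless s' else true.

Lemma chordless_cat s1 x s2 :
  chordless (s1 ++ x :: s2) =
  [&& chordless (rcons s1 x), chordless (x :: s2)
    & all (fun u => all (fun v => ~~ e u v) s2) s1].
Proof.
elim: s1 => [|u s1 IH]; first by rewrite /= andbT.
rewrite cat_cons [LHS]/= IH rcons_cons [chordless (u :: _)]/=.
case: s1 {IH} => [|v s1] /=; first by rewrite !andbT andbC.
rewrite all_cat all_rcons /=.
by case: (all _ s1) (~~ e u x) (all _ s2) => [] [] []; rewrite /= ?andbF.
Qed.

Lemma chordless_rcons s x : chordless (rcons s x) -> chordless s.
Proof. by case/lastP: s => // s y; rewrite -cats1 cat_rcons chordless_cat => /andP[]. Qed.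

Lemma chordless_nth x0 s i j :
  chordless s -> i.+1 < j -> j < size s -> ~~ e (nth x0 s i) (nth x0 s j).
Proof.
elim: s i j => [|x s IH] i j //= /andP[x_s cs]; case: i => [|i] ij js; last first.
  by case: j ij js => [|j] //= ij js; apply: IH.
case: j ij js => [|[|j]] // _ js; case: s js {IH cs} x_s => //= y s js x_s.
by apply: (allP x_s); apply: mem_nth.
Qed.

Lemma not_chordless s : ~~ chordless s ->
  exists s1 x s2 z s3, [/\ s = s1 ++ x :: s2 ++ z :: s3, s2 != [::] & e x z].
Proof.
elim: s => //= x s IH; rewrite negb_and.
case/orP => [/allPn [z z_s /negPn exz] | /IH [s1 [y [s2 [z [s3 [-> s2n eyz]]]]]]].
  case: s {IH} z_s => //= y s /splitPr [s2 s3].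
  by exists [::], x, (y :: s2), z, s3.
by exists (x :: s1), y, s2, z, s3.
Qed.

Lemma chordless_rcons_nonadj s x y z :
  chordless (rcons s z) -> y \in s -> y != last x s -> ~~ e y z.
Proof.
case/lastP: s => [|s w] //; rewrite last_rcons mem_rcons inE => cs.
case/orP => [/eqP -> | ys _]; first by rewrite eqxx.
move: cs; rewrite -cats1 cat_rcons chordless_cat => /and3P[_ _ /allP /(_ y ys)].
by rewrite /= andbT.
Qed.

Definition path_via C a b p :=
  [&& p != [::], all [in C] p & path e a (rcons p b)].

Lemma path_via_cut C a b q s1 x s2 s3 :
  path_via C a b q -> rcons q b = s1 ++ x :: s2 ++ s3 ->
  s2 != [::] -> s3 != [::] -> path e x s3 ->
  exists2 q', path_via C a b q' & size q' < size q.
Proof.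
case/and3P => _ qC a_q; case/lastP: s3 => [|s3 y] // Eq s2n _ x_s3.
have [Eq' Eb] : q = s1 ++ x :: s2 ++ s3 /\ b = y.
  by move: Eq; rewrite -rcons_cat -rcons_cons -rcons_cat => /rcons_inj [].
exists (s1 ++ x :: s3); last first.
  rewrite Eq' !size_cat /= size_cat ltn_add2l ltnS -{1}[size s3]add0n ltn_add2r.
  by rewrite lt0n size_eq0.
apply/and3P; split; first by case: (s1).
  apply/allP => z z_in; apply: (allP qC); move: z_in.
  by rewrite Eq' !mem_cat !inE mem_cat => /or3P [-> | -> | ->]; rewrite ?orbT.
move: a_q; rewrite Eq Eb !rcons_cat rcons_cons !cat_path /= => /and3P[-> -> _].
by rewrite x_s3.
Qed.

Lemma path_via_uniq C a b q : a \notin C -> b \notin C -> a != b ->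
  path_via C a b q -> uniq q -> uniq (a :: rcons q b).
Proof.
move=> aC bC ab /and3P[_ qC _] uq.
have notq c : c \notin C -> c \notin q by apply: contra => /(allP qC).
by rewrite /= mem_rcons inE negb_or ab !notq // rcons_uniq notq.
Qed.

Lemma path_via_min C a b p : path_via C a b p ->
  exists2 q, path_via C a b q & forall q', path_via C a b q' -> size q <= size q'.
Proof.
move=> vp; have ex_m : exists m, [exists t : m.-tuple T, path_via C a b t].
  by exists (size p); apply/existsP; exists (in_tuple p).
case: (ex_minnP ex_m) => m /existsP [t vt] min_m; exists (val t) => // q' vq'.
by rewrite size_tuple; apply: min_m; apply/existsP; exists (in_tuple q').
Qed.

Section MinimalPath.
Variables (C : {set T}) (a b : T) (q : seq T).
Hypotheses (vq : path_via C a b q)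
  (minq : forall q', path_via C a b q' -> size q <= size q').

Lemma min_path_via_uniq : uniq q.
Proof.
apply/negPn/negP => /not_uniq_split [s1 [x [s2 [s3 Eq]]]].
have Eqb : rcons q b = s1 ++ x :: rcons s2 x ++ rcons s3 b.
  by rewrite Eq rcons_cat /= rcons_cat cat_rcons.
have x_s3 : path e x (rcons s3 b).
  by case/and3P: vq => _ _; rewrite Eqb cat_rcons -cat_cons catA; apply: path_catr.
have s3b : rcons s3 b != [::] by case: (s3).
have s2x : rcons s2 x != [::] by case: (s2).
have [q' /minq] := path_via_cut vq Eqb s2x s3b x_s3.
by rewrite leqNgt => /negP.
Qed.

Lemma min_path_via_chordless : chordless (rcons q b).
Proof.
apply/negPn/negP => /not_chordless [s1 [x [s2 [z [s3 [Eq s2n exz]]]]]].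
have x_zs3 : path e x (z :: s3).
  by case/and3P: vq => _ _; rewrite Eq -cat_cons catA /= exz; apply: path_catr.
have [q' /minq] := path_via_cut vq Eq s2n isT x_zs3.
by rewrite leqNgt => /negP.
Qed.

Lemma min_path_via_head : {in behead q, forall y, ~~ e a y}.
Proof.
move=> y; case Eq: q => [|x q0] //= y_q0; apply/negP => ay.
case/splitPr: y_q0 Eq => s1 s2 Eq.
have vq' : path_via C a b (y :: s2).
  case/and3P: vq => _ qC a_q; apply/and3P; split => //.
    apply/allP => z z_s2; apply: (allP qC).
    by rewrite Eq; apply: mem_behead; rewrite /= mem_cat z_s2 orbT.
  rewrite rcons_cons /= ay; move: a_q.
  by rewrite Eq rcons_cons rcons_cat rcons_cons -cat_cons => /path_catr.
by move: (minq vq'); rewrite Eq /= size_cat /= ltnNge leq_addl.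
Qed.

End MinimalPath.

Definition tight_path C a b q :=
  [/\ path_via C a b q, uniq q, chordless (rcons q b)
     & {in behead q, forall y, ~~ e a y}].

Lemma path_via_tight C a b p : path_via C a b p -> exists q, tight_path C a b q.
Proof.
case/path_via_min => q vq minq; exists q; split => //.
- exact: min_path_via_uniq minq.
- exact: min_path_via_chordless minq.
- exact: min_path_via_head minq.
Qed.

End ShortestPaths.

Section Graph.
Variables (n : nat) (e : rel 'I_n).
Hypotheses (e_sym : symmetric e) (e_irr : irreflexive e).
Implicit Types (S A T K C : {set 'I_n}) (x y z u v w p : 'I_n).

Local Notation conn S := (connect (induced_rel e S)).

Lemma conn_sym S : connect_sym (induced_rel e S).
Proof.
by apply: sym_connect_sym => x y; rewrite /induced_rel e_sym [(x \in S) && _]andbC.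
Qed.

Lemma conn_sub S S' : S \subset S' -> subrel (conn S) (conn S').
Proof.
move=> sSS'; apply: connect_sub => x y /and3P[exy xS yS]; apply: connect1.
by rewrite /induced_rel exy !(subsetP sSS').
Qed.

Lemma conn_closed S (Z : {set 'I_n}) x y :
  (forall u v, induced_rel e S u v -> u \in Z -> v \in Z) ->
  conn S x y -> x \in Z -> y \in Z.
Proof. by move=> Zcl /(closed_connect (intro_closed (conn_sym S) Zcl)) ->. Qed.

Lemma edge_conn S u v : u \in S -> v \in S -> e u v -> conn S u v.
Proof. by move=> uS vS euv; apply: connect1; rewrite /induced_rel euv uS vS. Qed.

Lemma comp_of_eq S x y :
  x \in S -> y \in S -> (comp_of e S x == comp_of e S y) = conn S x y.
Proof.
move=> xS yS; apply/eqP/idP => [Exy | cxy].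
  have : y \in comp_of e S y by rewrite inE yS connect0.
  by rewrite -Exy inE => /andP[].
by apply/setP => z; rewrite !inE (same_connect (conn_sym S) cxy).
Qed.

Lemma comp_of_edge S p u v :
  u \in comp_of e S p -> v \in S -> e u v -> v \in comp_of e S p.
Proof.
rewrite !inE => /andP[uS pu] vS euv.
by rewrite vS (connect_trans pu) // edge_conn.
Qed.

Lemma comp_of_conn S p x y :
  x \in comp_of e S p -> conn S x y -> y \in comp_of e S p.
Proof.
move=> xK /conn_closed; apply=> // u v /and3P[euv _ vS] uK.
exact: comp_of_edge uK vS euv.
Qed.

Lemma comp_of_separated S p1 p2 : ~~ conn S p1 p2 ->
  {in comp_of e S p1 & comp_of e S p2, forall u v, (u != v) && ~~ e u v}.
Proof.
move=> np12 u v u1 v2; have vS : v \in S by move: v2; rewrite inE => /andP[].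
have v_notin1 : v \notin comp_of e S p1.
  apply: contra np12; rewrite inE => /andP[_ p1v]; move: v2; rewrite inE => /andP[_ p2v].
  by rewrite (same_connect (conn_sym S) p1v) conn_sym.
apply/andP; split; first by apply: contraNneq v_notin1 => <-.
by apply: contra v_notin1; apply: comp_of_edge.
Qed.

Lemma ncomp_le S S' : S \subset S' ->
  {in S &, forall x y, conn S' x y -> conn S x y} -> ncomp e S <= ncomp e S'.
Proof.
move=> sSS' cS; rewrite /ncomp; apply: leq_trans (subset_leq_card (imsetS _ sSS')).
apply: leq_card_imset_factor => x y xS yS /eqP.
by rewrite comp_of_eq ?(subsetP sSS') // => /cS cxy; apply/eqP; rewrite comp_of_eq ?cxy.
Qed.

Lemma ncomp_lt S S' x y : S \subset S' ->
  {in S', forall z, exists2 u, u \in S & conn S' z u} ->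
  x \in S -> y \in S -> conn S' x y -> ~~ conn S x y -> ncomp e S' < ncomp e S.
Proof.
move=> sSS' meetS xS yS cxy ncxy; have S'_S := subsetP sSS'; rewrite /ncomp.
have -> : comp_of e S' @: S' = comp_of e S' @: S.
  apply/eqP; rewrite eqEsubset (imsetS _ sSS') andbT; apply/subsetP => _ /imsetP[z zS' ->].
  have [u uS zu] := meetS z zS'; apply/imsetP; exists u => //.
  by apply/eqP; rewrite comp_of_eq // S'_S.
apply: (ltn_card_imset_factor _ xS yS).
- move=> u v uS vS /eqP; rewrite comp_of_eq // => cuv.
  by apply/eqP; rewrite comp_of_eq ?S'_S // (conn_sub sSS').
- by apply/eqP; rewrite comp_of_eq ?S'_S.
- by rewrite comp_of_eq.
Qed.

Lemma conn_setU1 S v x y : v \notin S ->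
  {in S &, forall u w, e v u -> e v w -> conn S u w} ->
  x \in S -> y \in S -> conn (v |: S) x y -> conn S x y.
Proof.
move=> vS nbrs xS yS cxy.
pose Z := [set z | (z \in S) && conn S x z
                   || (z == v) && [exists u in S, conn S x u && e v u]].
suff : y \in Z.
  have yv : y != v by apply: contraNneq vS => <-.
  by rewrite inE (negbTE yv) orbF => /andP[].
apply: (conn_closed _ cxy); last by rewrite inE xS connect0.
move=> u u' /and3P[eu _ u'_vS]; rewrite !inE.
have u'S : u' != v -> u' \in S.
  by move=> /negbTE u'v; case/setU1P: u'_vS => // /eqP; rewrite u'v.
case/orP => [/andP[uS xu] | /andP[/eqP uv /exists_inP[c cS /andP[xc evc]]]].
  case: (eqVneq u' v) => u'v.
    by apply/orP; right; apply/exists_inP; exists u; rewrite // xu e_sym -u'v.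
  by rewrite u'S // (connect_trans xu) ?edge_conn ?u'S.
have u'v : u' != v by apply: contraTneq eu => ->; rewrite uv e_irr.
by rewrite u'S // (connect_trans xc) // nbrs // ?u'S // -uv.
Qed.

Lemma cut_vertex_far_neighbour S v y : v \notin S -> cut_vertex e (v |: S) v ->
  y \in S -> exists2 x, x \in S & e v x && ~~ conn S y x.
Proof.
move=> vS; rewrite /cut_vertex setU1K // => /andP[_ lt_ncomp] yS.
case: (boolP [exists x in S, e v x && ~~ conn S y x]) => [/exists_inP | /exists_inPn nofar].
  by case=> x; exists x.
move: lt_ncomp; rewrite ltnNge => /negP; case; apply: ncomp_le; first exact: subsetUr.
move=> x z xS zS; apply: conn_setU1 => // u w uS wS evu evw.
move: (nofar u uS) (nofar w wS); rewrite evu evw /= !negbK (conn_sym S).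
exact: connect_trans.
Qed.

Lemma minimal_cut_set_cut_point A : minimal_cut_set e A -> cut_point_sets e A.
Proof.
case/minsetP => cutA minA; apply/orP; right; apply/forall_inP => i iA.
rewrite /cut_vertex setU11 /= setU1K ?inE ?iA //.
have -> : i |: ~: A = ~: (A :\ i) by rewrite setCD setUC.
have : ~~ cut_set e (A :\ i).
  by apply/negP => /minA /(_ (subD1set A i)) /setP /(_ i); rewrite !inE eqxx iA.
by rewrite /cut_set /cG -leqNgt => /leq_ltn_trans; apply.
Qed.

Lemma cut_set_split A : cut_set e A ->
  exists p1 p2, [/\ p1 \notin A, p2 \notin A, conn setT p1 p2 & ~~ conn (~: A) p1 p2].
Proof.
move=> cutA.
case: (boolP [exists p1 in ~: A, exists p2 in ~: A,
                conn setT p1 p2 && ~~ conn (~: A) p1 p2]).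
  case/exists_inP => p1; rewrite inE => p1A /exists_inP[p2]; rewrite inE => p2A.
  by case/andP => c12 nc12; exists p1, p2.
move/exists_inPn => nosplit; move: cutA; rewrite /cut_set /cG /cG0 ltnNge => /negP; case.
apply: ncomp_le; first exact: subsetT.
move=> x y xA yA cxy; move/exists_inPn: (nosplit x xA) => /(_ y yA).
by rewrite cxy negbK.
Qed.

(* The component of p1 in G - A remains a component when only the vertices of
   A adjacent to it are removed. *)
Lemma cut_set_attach A p1 p2 : p1 \notin A -> p2 \notin A ->
  conn setT p1 p2 -> ~~ conn (~: A) p1 p2 ->
  cut_set e [set a in A | [exists c in comp_of e (~: A) p1, e a c]].
Proof.
move=> p1A p2A c12 nc12; set K := comp_of e (~: A) p1; set A1 := [set a in A | _].
have notA1 z : z \notin A -> z \in ~: A1 by rewrite !inE; apply: contra => /andP[].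
have Kcl u v : induced_rel e (~: A1) u v -> u \in K -> v \in K.
  case/and3P => euv _; rewrite inE => vA1 uK; apply: (comp_of_edge uK _ euv).
  rewrite inE; apply: contra vA1 => vA; rewrite inE vA; apply/exists_inP.
  by exists u; last rewrite e_sym.
rewrite /cut_set /cG /cG0.
apply: (ncomp_lt (subsetT _) _ (notA1 _ p1A) (notA1 _ p2A) c12).
  move=> z _; case: (boolP (z \in A1)) => zA1.
    2: by exists z; [rewrite inE | exact: connect0].
  have := zA1; rewrite inE => /andP[_ /exists_inP[c cK ezc]].
  exists c; last by rewrite edge_conn ?inE.
  by apply: notA1; move: cK; rewrite /K !inE => /andP[].
apply: contra nc12 => c12'; have := conn_closed Kcl c12'.
by rewrite /K !inE p1A connect0 => /(_ isT) /andP[].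
Qed.

Lemma minimal_cut_set_full A : minimal_cut_set e A ->
  exists p1 p2, [/\ p1 \notin A, p2 \notin A, ~~ conn (~: A) p1 p2,
    {in A, forall a, exists2 c, c \in comp_of e (~: A) p1 & e a c} &
    {in A, forall a, exists2 c, c \in comp_of e (~: A) p2 & e a c}].
Proof.
case/minsetP => cutA minA; have [p1 [p2 [p1A p2A c12 nc12]]] := cut_set_split cutA.
have full p p' : p \notin A -> p' \notin A -> conn setT p p' -> ~~ conn (~: A) p p' ->
    {in A, forall a, exists2 c, c \in comp_of e (~: A) p & e a c}.
  move=> pA p'A cpp' ncpp' a aA.
  have sub : [set b in A | [exists c in comp_of e (~: A) p, e b c]] \subset A.
    by apply/subsetP => b; rewrite inE => /andP[].
  have /setP/(_ a) := minA _ (cut_set_attach pA p'A cpp' ncpp') sub.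
  by rewrite inE aA => /exists_inP.
exists p1, p2; split => //; first exact: full p1A p2A c12 nc12.
by apply: full p2A p1A _ _; rewrite conn_sym.
Qed.

Lemma path_via_comp S p a b c1 c2 :
  c1 \in comp_of e S p -> c2 \in comp_of e S p -> e a c1 -> e b c2 ->
  exists q, path_via e (comp_of e S p) a b q.
Proof.
move=> c1K c2K ac1 bc2.
have c12 : conn S c1 c2.
  move: c1K c2K; rewrite !inE => /andP[_ pc1] /andP[_ pc2].
  by rewrite -(same_connect (conn_sym S) pc1).
case/connectP: c12 => r r_path c2_last; exists (c1 :: r); apply/and3P; split => //.
  apply/allP => z z_r; apply: comp_of_conn c1K _.
  exact: path_connect r_path z z_r.
rewrite rcons_cons /= ac1 rcons_path -c2_last e_sym bc2 andbT.
by apply: sub_path r_path => u v /and3P[].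
Qed.

Lemma clique_adj K x y : clique e K -> x \in K -> y \in K -> x != y -> e x y.
Proof.
by move=> /forall_inP clK xK yK; move/forall_inP: (clK x xK) => /(_ y yK) /implyP.
Qed.

Lemma clique_setU1 x K : clique e K -> {in K, forall y, e x y} -> clique e (x |: K).
Proof.
move=> clK xK; apply/forall_inP => u /setU1P uxK; apply/forall_inP => v /setU1P vxK.
apply/implyP; case: uxK vxK => [-> | uK] [-> | vK]; rewrite ?eqxx // => uv.
- exact: xK.
- by rewrite e_sym; apply: xK.
- exact: clique_adj clK uK vK uv.
Qed.

Lemma clique1 x : clique e [set x].
Proof.
by apply/forall_inP => u /set1P ->; apply/forall_inP => v /set1P ->; rewrite eqxx.
Qed.

Lemma chordal_cycle_chord x s : chordal e -> uniq (x :: s) -> 3 <= size s ->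
  path e x s -> e (last x s) x -> chordless e s ->
  exists2 y, y \in s & [&& e x y, y != head x s & y != last x s].
Proof.
move=> ch us s3 xs sx cs; have /andP[_ us'] := us.
have cyc : cycle e (x :: s) by rewrite /= rcons_path xs.
have [[|i] [j [ij js jSi not_ends eij]]] := ch x s us s3 cyc; last first.
  case: j ij js jSi eij {not_ends} => [|j] //= ij js jSi.
  have ij' : i.+1 < j by lia.
  by rewrite (negbTE (chordless_nth x cs ij' js)).
case: j ij js jSi not_ends eij => [|j] //= _ js jSi not_ends exj.
have [j0 j_last] : j != 0 /\ j != (size s).-1 by split; lia.
exists (nth x s j); first exact: mem_nth.
rewrite exj -nth0 -nth_last !nth_uniq //=; [by apply/andP | lia | lia].
Qed.

Lemma chordal_common_neighbour C a b r : chordal e ->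
  a \notin C -> b \notin C -> e a b -> path_via e C a b r ->
  exists2 c, c \in C & e a c && e b c.
Proof.
move=> ch aC bC eab /path_via_tight [q [vq uq cq a_q]].
have ab : a != b by apply: contraTneq eab => ->; rewrite e_irr.
have /and3P[_ qC aqb] := vq.
case: q vq uq cq a_q qC aqb => [|c [|y q]] // vq uq cq a_q.
  by move=> /andP[cC _] /and3P[eac ecb _]; exists c; last rewrite eac e_sym.
move=> _ aqb; have uq' := path_via_uniq aC bC ab vq uq.
have s3 : 3 <= size (rcons [:: c, y & q] b) by rewrite size_rcons.
have ba : e (last a (rcons [:: c, y & q] b)) a by rewrite last_rcons e_sym.
have [z] := chordal_cycle_chord ch uq' s3 aqb ba cq.
rewrite mem_rcons in_cons => /predU1P[-> | ]; first by rewrite last_rcons eqxx !andbF.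
rewrite in_cons => /predU1P[-> | zq]; first by rewrite eqxx andbF.
by rewrite (negbTE (a_q z zq)).
Qed.

(* Otherwise a, a shortest a-b path through C1, b and a shortest b-a path
   through C2 form a chordless cycle of length at least 4. *)
Lemma chordal_separator_edge C1 C2 a b r1 r2 : chordal e -> a != b ->
  a \notin C1 :|: C2 -> b \notin C1 :|: C2 ->
  {in C1 & C2, forall u v, (u != v) && ~~ e u v} ->
  path_via e C1 a b r1 -> path_via e C2 b a r2 -> e a b.
Proof.
move=> ch ab; rewrite !inE !negb_or => /andP[aC1 aC2] /andP[bC1 bC2] sep.
case/path_via_tight => q1 [v1 u1 c1 a_q1]; case/path_via_tight => q2 [v2 u2 c2 b_q2].
have /and3P[q1n /allP in1 aq1b] := v1; have /and3P[q2n /allP in2 bq2a] := v2.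
move: bq2a; rewrite rcons_path => /andP[bq2 q2a].
apply/negPn/negP => nab; set s := rcons q1 b ++ q2.
have us : uniq (a :: s).
  rewrite -cat_cons cat_uniq (path_via_uniq aC1 bC1 ab v1 u1) u2 andbT /=.
  apply/hasPn => v /in2 vC2; rewrite !inE mem_rcons !inE.
  have vq1 : v \notin q1.
    by apply/negP => /in1 vC1; case/andP: (sep v v vC1 vC2); rewrite eqxx.
  rewrite (negbTE vq1) orbF; apply/norP.
  by split; [apply: (contraNneq _ aC2) | apply: (contraNneq _ bC2)] => <-.
have s3 : 3 <= size s.
  have q1_pos : 0 < size q1 by rewrite lt0n size_eq0.
  have q2_pos : 0 < size q2 by rewrite lt0n size_eq0.
  by rewrite size_cat size_rcons addSn ltnS (leq_add q1_pos q2_pos).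
have ps : path e a s by rewrite cat_path aq1b last_rcons.
have sa : e (last a s) a by rewrite last_cat last_rcons.
have cs : chordless e s.
  rewrite /s cat_rcons chordless_cat c1 /= (chordless_rcons c2) andbT.
  apply/andP; split; first by apply/allP => y /b_q2.
  apply/allP => u /in1 uC1; apply/allP => v /in2 vC2.
  by case/andP: (sep u v uC1 vC2).
have [y] := chordal_cycle_chord ch us s3 ps sa cs.
have -> : head a s = head a q1 by rewrite /s; case: (q1) q1n.
rewrite /s last_cat last_rcons mem_cat mem_rcons in_cons => /orP[/orP[/eqP-> | yq1] | yq2].
- by rewrite (negbTE nab).
- by case/and3P => ay /(mem_behead_neq yq1) /a_q1; rewrite ay.
- case/and3P => ay _ /(chordless_rcons_nonadj c2 yq2).
  by rewrite e_sym ay.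
Qed.

Lemma minimal_cut_set_clique A : chordal e -> minimal_cut_set e A -> clique e A.
Proof.
move=> ch mA; have [p1 [p2 [p1A p2A np12 full1 full2]]] := minimal_cut_set_full mA.
have notK a : a \in A -> a \notin comp_of e (~: A) p1 :|: comp_of e (~: A) p2.
  by move=> aA; rewrite !inE aA.
apply/forall_inP => a aA; apply/forall_inP => b bA; apply/implyP => ab.
have [[c1 c1K ac1] [d1 d1K bd1]] := (full1 a aA, full1 b bA).
have [[c2 c2K ac2] [d2 d2K bd2]] := (full2 a aA, full2 b bA).
have [r1 vr1] := path_via_comp c1K d1K ac1 bd1.
have [r2 vr2] := path_via_comp d2K c2K bd2 ac2.
apply: chordal_separator_edge ch ab (notK a aA) (notK b bA) _ vr1 vr2.
exact: comp_of_separated np12.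
Qed.

Lemma minimal_cut_set_common_neighbours A i j : chordal e -> minimal_cut_set e A ->
  i \in A -> j \in A -> i != j ->
  exists z w, [/\ e i z && e j z, e i w && e j w, z != w & ~~ e z w].
Proof.
move=> ch mA iA jA ij; have eij := clique_adj (minimal_cut_set_clique ch mA) iA jA ij.
have [p1 [p2 [p1A p2A np12 full1 full2]]] := minimal_cut_set_full mA.
have common p : {in A, forall a, exists2 c, c \in comp_of e (~: A) p & e a c} ->
    exists2 z, z \in comp_of e (~: A) p & e i z && e j z.
  move=> full; have [[c ci eic] [d dj ejd]] := (full i iA, full j jA).
  have [r vr] := path_via_comp ci dj eic ejd.
  by apply: chordal_common_neighbour ch _ _ eij vr; rewrite inE inE ?iA ?jA.
have [z z1 ijz] := common p1 full1; have [w w2 ijw] := common p2 full2.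
by exists z, w; split => //; case/andP: (comp_of_separated np12 z1 w2).
Qed.

Lemma generalized_block_graph_neighbour i j z w x :
  generalized_block_graph e -> e i j -> e i z && e j z -> e i w && e j w ->
  z != w -> ~~ e z w -> e i x -> (x == j) || e j x.
Proof.
case=> _ gbg eij /andP[eiz ejz] /andP[eiw ejw] zw nzw eix.
have triangle y : e i y -> e j y -> clique e (i |: (j |: [set y])).
  move=> eiy ejy; apply: clique_setU1; last by move=> u; rewrite !inE => /orP[] /eqP->.
  by apply: clique_setU1 (clique1 y) _ => u /set1P->.
have [Fa fa /subsetP sa] := maxset_exists (triangle z eiz ejz).
have [Fb fb /subsetP sb] := maxset_exists (triangle w eiw ejw).
have ix : {in [set x], forall u, e i u} by move=> u /set1P->.
have [Fc fc /subsetP sc] := maxset_exists (clique_setU1 (clique1 x) ix).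
have [iFa jFa zFa] : [/\ i \in Fa, j \in Fa & z \in Fa].
  by split; apply: sa; rewrite !inE eqxx ?orbT.
have [iFb jFb wFb] : [/\ i \in Fb, j \in Fb & w \in Fb].
  by split; apply: sb; rewrite !inE eqxx ?orbT.
have [iFc xFc] : i \in Fc /\ x \in Fc by split; apply: sc; rewrite !inE eqxx ?orbT.
suff jFc : j \in Fc.
  case: (eqVneq x j) => //= xj; rewrite e_sym.
  exact: clique_adj (maxsetp fc) xFc jFc xj.
have Fab : Fa != Fb.
  by apply: contraNneq nzw => Fab; apply: clique_adj (maxsetp fa) zFa _ zw; rewrite Fab.
case: (eqVneq Fc Fa) => [-> // | Fca]; case: (eqVneq Fc Fb) => [-> // | Fcb].
have iFabc : Fa :&: Fb :&: Fc != set0 by apply/set0Pn; exists i; rewrite !inE iFa iFb iFc.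
rewrite eq_sym in Fca; rewrite eq_sym in Fcb.
have [Eab _] := gbg _ _ _ fa fb fc Fab Fca Fcb iFabc.
by have /setIP[] : j \in Fa :&: Fc by rewrite -Eab inE jFa jFb.
Qed.

End Graph.

Theorem lemma3p1 (n : nat) (e : rel 'I_n) (A : {set 'I_n}) :
  simple_graph e -> minimal_cut_set e A ->
  cut_point_sets e A /\
  (generalized_block_graph e ->
   forall T : {set 'I_n}, cut_point_sets e T -> A \subset T \/ A :&: T = set0).
Proof.
move=> [e_sym e_irr] mA; split; first exact: minimal_cut_set_cut_point.
move=> gbg T cpT; have ch := gbg.1.
case: (boolP (A \subset T)) => [|/subsetPn [j jA jT]]; [by left | right].
apply/eqP; apply: contraT => /set0Pn [i /setIP [iA iT]].
have ij : i != j by apply: contraNneq jT => <-.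
have eij := clique_adj (minimal_cut_set_clique e_sym ch mA) iA jA ij.
have [z [w [ijz ijw zw nzw]]] :=
  minimal_cut_set_common_neighbours e_sym e_irr ch mA iA jA ij.
have cut_i : cut_vertex e (i |: ~: T) i.
  by case/orP: cpT => [/eqP T0 | /forall_inP]; [rewrite T0 inE in iT | apply].
have iT' : i \notin ~: T by rewrite inE iT.
have jT' : j \in ~: T by rewrite inE.
have [x xT /andP[eix njx]] := cut_vertex_far_neighbour e_sym e_irr iT' cut_i jT'.
case/orP: (generalized_block_graph_neighbour e_sym gbg eij ijz ijw zw nzw eix).
  by move/eqP=> xj; rewrite xj connect0 in njx.
by move=> ejx; rewrite edge_conn in njx.
Qed.
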